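(* Let $v\ne e$ be a boolean permutation. Then no optimal partner $w$ for $v$ satisfies $w\ge v$ in the Bruhat order.
   Context: $\sigma_i=(i,i+1)$; $\ell$ is length; $B(w)$ is the principal Bruhat order ideal of $w$; $e$ is the identity. A permutation is boolean if its reduced words have no repeated letters. For $Q\subseteq\mathfrak{S}_n$ with induced Bruhat order, an almost perfect matching of $Q$ is a chain $\emptyset=Q_0\subset\cdots\subset Q_l=Q$ of coideals (upward-closed subsets of $Q$) with each $Q_i\setminus Q_{i-1}$ a pair $\{x_i,y_i\}$, $x_i<y_i$, $\ell(y_i)=\ell(x_i)+1$, except for exactly one $i$ where it is a singleton $\{z\}$ (the unmatched element). For boolean $v$, $\textsf{ork}(v)$ is the largest $\ell(z)$ over all $w\in\mathfrak{S}_n$ and all almost perfect matchings of $B(v)\cap B(w)$ with unmatched element $z$; an optimal partner of $v$ is a $w$ such that $B(v)\cap B(w)$ has an almost perfect matching whose unmatched element has length $\textsf{ork}(v)$. *)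

From HB Require Import structures.
From mathcomp Require Import all_boot all_order all_fingroup.
From Stdlib Require Import Relations.
From mathcomp Require Import boolp.
Set Implicit Arguments. Unset Strict Implicit. Unset Printing Implicit Defensive.

Section Defs.
Variable n : nat.
Local Notation P := {perm 'I_n}.

(* Coxeter length = number of inversions. *)
Definition len (w : P) : nat :=
  #|[set p : 'I_n * 'I_n | (p.1 < p.2) && (w p.2 < w p.1)]|.

(* simple transposition sigma_i = (i, i+1), 0-based positions, valid for i.+1 < n *)
Definition sgen (i : nat) : P :=
  match insub i, insub i.+1 with
  | Some a, Some b => tperm (a : 'I_n) (b : 'I_n)
  | _, _ => 1%g
  end.

Definition reduced_word (w : P) (ws : seq nat) : Prop :=
  all (fun i => i.+1 < n) ws /\ (\prod_(i <- ws) sgen i)%g = w /\ size ws = len w.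

Definition boolean_perm (w : P) : Prop :=
  forall ws, reduced_word w ws -> uniq ws.

Definition bruhat_step (u w : P) : Prop :=
  exists a b : 'I_n, a != b /\ w = (u * tperm a b)%g /\ len u < len w.
Definition bruhat : P -> P -> Prop := clos_refl_trans P bruhat_step.

Definition bideal (w : P) : {set P} := [set u | `[< bruhat u w >] ].

Definition coideal (Q A : {set P}) : Prop :=
  A \subset Q /\ forall x y, x \in A -> y \in Q -> bruhat x y -> y \in A.

Definition matched_pair (D : {set P}) : Prop :=
  exists x y : P, D = [set x; y] /\ bruhat x y /\ x != y /\ len y = (len x).+1.

(* Qs = [:: Q_1; ...; Q_l], Q_0 = set0 *)
Definition prevQ (Qs : seq {set P}) (i : nat) : {set P} :=
  if i is j.+1 then nth set0 Qs j else set0.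

Definition almost_perfect_matching (Q : {set P}) (Qs : seq {set P}) (z : P) : Prop :=
  last set0 Qs = Q /\
  (forall i, i < size Qs -> coideal Q (nth set0 Qs i)) /\
  (forall i, i < size Qs -> prevQ Qs i \proper nth set0 Qs i) /\
  exists2 i0, i0 < size Qs &
    nth set0 Qs i0 :\: prevQ Qs i0 = [set z] /\
    forall i, i < size Qs -> i != i0 -> matched_pair (nth set0 Qs i :\: prevQ Qs i).

Definition is_ork (v : P) (k : nat) : Prop :=
  (exists (w : P) Qs z, almost_perfect_matching (bideal v :&: bideal w) Qs z /\ len z = k) /\
  (forall (w : P) Qs z, almost_perfect_matching (bideal v :&: bideal w) Qs z -> len z <= k).

Definition optimal_partner (v w : P) : Prop :=
  exists k, is_ork v k /\
    exists Qs z, almost_perfect_matching (bideal v :&: bideal w) Qs z /\ len z = k.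

End Defs.

From mathcomp Require Import all_boot all_order all_fingroup zify.
From Stdlib Require Import Relations.
From mathcomp Require Import boolp.
Set Implicit Arguments. Unset Strict Implicit. Unset Printing Implicit Defensive.

(* If v <= w then B(v) ∩ B(w) = B(v), and an almost perfect matching splits its
   ground set into pairs and one singleton, so B(v) would have odd size.  But
   when v <> e, v has a descent s = (a, a+1) on the right, and by the lifting
   property u |-> us is a fixed-point-free involution of B(v), so |B(v)| is
   even. *)

Lemma card_involution_even (T : finType) (f : T -> T) (A : {pred T}) :
  involutive f -> (forall x, f x != x) -> {homo f : x / x \in A} -> ~~ odd #|A|.
Proof.
move=> f_inv f_fixfree f_A.
have order2 x : x \in order_set f 2.
  rewrite inE (@order_cycle _ _ [:: x; f x]) ?inE ?eqxx //=.
    by rewrite f_inv !eqxx.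
  by rewrite andbT inE eq_sym f_fixfree.
have A_closed : fclosed f A.
  by move=> x _ /eqP <-; apply/idP/idP => [/f_A|/f_A]; rewrite ?f_inv.
rewrite -(@fcard_order_set _ _ (inv_inj f_inv) 2 A) ?oddM ?andbF //.
by apply/subsetP => x _; apply: order2.
Qed.

Section BruhatIdeal.
Variable n : nat.
Local Notation P := {perm 'I_n}.

Definition inversions (w : P) : {set 'I_n * 'I_n} :=
  [set p : 'I_n * 'I_n | (p.1 < p.2) && (w p.2 < w p.1)].

Lemma len_inversions (w : P) : len w = #|inversions w|.
Proof. by []. Qed.

Lemma tperm_mul_conj (u : P) (i j : 'I_n) :
  (u * tperm (u i) (u j) = tperm i j * u)%g.
Proof. by rewrite -tpermJ /conjg !mulgA mulgV mul1g. Qed.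

Section TranspositionLength.
Variables (u : P) (i j : 'I_n).
Hypotheses (lt_ij : i < j) (lt_uij : u i < u j).
Local Notation s := (tperm i j).

Let between (z : 'I_n) := (u i < u z) && (u z < u j).
Let moved (z : 'I_n) := (z == i) || (z == j).
Let touch (p : 'I_n * 'I_n) :=
  moved p.1 && between p.2 || moved p.2 && between p.1.
(* [swap] exchanges i and j in the pairs whose other entry has its u-value
   strictly between u i and u j; it injects the inversions of u into those of
   (i j) u, and misses the new inversion (i, j). *)
Let swap (p : 'I_n * 'I_n) := if touch p then (s p.1, s p.2) else p.

Let tperm_fix_between z : between z -> s z = z.
Proof.
by case/andP=> iz zj; apply: tpermD; apply/eqP=> e; move: iz zj; rewrite e ltnn ?andbF.
Qed.

Let moved_tperm z : moved (s z) = moved z.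
Proof.
rewrite /moved.
by case: tpermP => [->|->|/eqP/negbTE-> /eqP/negbTE->]; rewrite ?eqxx ?orbT.
Qed.

Let between_tperm z : between (s z) = between z.
Proof.
apply/idP/idP => [bsz|/tperm_fix_between -> //].
by have := tperm_fix_between bsz; rewrite tpermK => ->.
Qed.

Let touch_tperm p : touch (s p.1, s p.2) = touch p.
Proof. by rewrite /touch /= !moved_tperm !between_tperm. Qed.

Let swap_involutive : involutive swap.
Proof.
move=> p; rewrite /swap; have [t|/negbTE t] := boolP (touch p) => /=; last by rewrite t.
by rewrite touch_tperm t /= !tpermK; case: p {t}.
Qed.

Let swap_inversions p : p \in inversions u -> swap p \in inversions (s * u).
Proof.
have u_neq z z' : (z == z') = false -> (u z : nat) <> u z'.
  by move=> /negbT/eqP nzz' /val_inj/perm_inj.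
have ji : (j == i) = false by apply: negbTE; rewrite neq_ltn lt_ij orbT.
have ij : (i == j) = false by rewrite eq_sym.
case: p => x y; rewrite /swap /touch /between /moved !inE /= !permM.
move: lt_ij lt_uij; case: ifP; rewrite ?tpermK;
  case: (tpermP i j x) =>
    [->|->|/eqP/negbTE/[dup]/u_neq uxi xi /eqP/negbTE/[dup]/u_neq uxj xj];
  case: (tpermP i j y) =>
    [->|->|/eqP/negbTE/[dup]/u_neq uyi yi /eqP/negbTE/[dup]/u_neq uyj yj];
  rewrite ?eqxx ?ij ?ji ?xi ?xj ?yi ?yj /=; lia.
Qed.

Lemma len_tperm_lt : len u < len (s * u).
Proof.
have uij_inv : (i, j) \notin inversions u by rewrite inE /= lt_ij ltnNge (ltnW lt_uij).
rewrite !len_inversions -(card_imset _ (inv_inj swap_involutive)).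
apply: proper_card; apply/properP; split.
  by apply/subsetP => _ /imsetP[p p_inv ->]; apply: swap_inversions.
exists (i, j); first by rewrite inE /= !permM tpermL tpermR lt_ij lt_uij.
apply: contra uij_inv => /imsetP[p p_inv ij_swap].
suff -> : (i, j) = swap (i, j) by rewrite ij_swap swap_involutive.
by rewrite /swap /touch /between /= !ltnn !andbF.
Qed.

End TranspositionLength.

Lemma len_tperm_gt (u : P) (i j : 'I_n) :
  i < j -> u j < u i -> len (tperm i j * u)%g < len u.
Proof.
move=> lt_ij lt_uji.
have := @len_tperm_lt (tperm i j * u)%g i j lt_ij.
by rewrite !permM tpermL tpermR mulgA tperm2 mul1g => ->.
Qed.

Lemma bruhat_stepP (u x : P) :
  bruhat_step u x <-> exists i j : 'I_n, [/\ i < j, u i < u j & x = (tperm i j * u)%g].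
Proof.
split=> [[a [b [neq_ab [-> lt_len]]]]|[i [j [lt_ij lt_uij ->]]]]; last first.
  exists (u i), (u j); rewrite tperm_mul_conj (inj_eq perm_inj) neq_ltn lt_ij.
  by do !split; apply: len_tperm_lt.
wlog lt_ab : a b neq_ab lt_len / (u^-1)%g a < (u^-1)%g b.
  move=> hwlog; have := neq_ab; rewrite -(inj_eq (@perm_inj _ (u^-1)%g)) neq_ltn.
  case/orP=> [lt|gt]; first exact: hwlog.
  by rewrite tpermC; apply: hwlog; rewrite 1?eq_sym 1?tpermC.
exists ((u^-1)%g a), ((u^-1)%g b); rewrite -tperm_mul_conj !permKV.
split=> //; move: neq_ab; rewrite neq_ltn => /orP[//|lt_ba].
have := @len_tperm_gt u _ _ lt_ab; rewrite -tperm_mul_conj !permKV => /(_ lt_ba).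
by rewrite ltnNge ltnW.
Qed.

Section AdjacentTransposition.
Variables a a' : 'I_n.
Hypothesis a'E : a' = a.+1 :> nat.
Local Notation s := (tperm a a').

Lemma neq_adjacent : a != a'.
Proof. by apply/eqP=> aa'; move: a'E; rewrite -aa'; lia. Qed.

Lemma tperm_adjacent_lt (x y : 'I_n) : x < y -> (x, y) != (a, a') -> s x < s y.
Proof.
have valE (z z' : 'I_n) : (z == z') = (z == z' :> nat) by [].
have val_neq (z z' : 'I_n) : z <> z' -> (z : nat) <> z' by move=> neq /val_inj.
rewrite xpair_eqE !valE; move: a'E.
by case: (tpermP a a' x) => [->|->|/val_neq xa /val_neq xa'];
  case: (tpermP a a' y) => [->|->|/val_neq ya /val_neq ya']; lia.
Qed.

Lemma bruhat_step_descent (u : P) : (u^-1)%g a' < (u^-1)%g a -> bruhat_step (u * s)%g u.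
Proof.
move=> desc; apply/bruhat_stepP; exists ((u^-1)%g a'), ((u^-1)%g a).
rewrite !permM !permKV tpermL tpermR a'E ltnSn -tperm_mul_conj !permM !permKV.
by rewrite tpermR tpermL -mulgA tperm2 mulg1.
Qed.

Lemma bruhat_lift (v : P) : (v^-1)%g a' < (v^-1)%g a ->
  forall u, bruhat u v -> bruhat (u * s)%g v.
Proof.
move=> + u /clos_rt_rt1n_iff uv.
elim: uv => [p|p x y p_x /clos_rt_rt1n_iff x_y IH] v_desc.
  by apply: rt_step; apply: bruhat_step_descent.
have [i [j [lt_ij lt_pij xE]]] := iffLR (bruhat_stepP p x) p_x.
(* Only the step by the transposition s itself fails to commute with
   right multiplication by s. *)
have [/andP[/eqP pia /eqP pja']|neq] := boolP ((p i == a) && (p j == a')).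
  by rewrite -pia -pja' tperm_mul_conj -xE.
apply: rt_trans (IH v_desc); apply: rt_step; apply/bruhat_stepP; exists i, j.
by rewrite xE !permM -mulgA; split=> //; apply: tperm_adjacent_lt; rewrite ?xpair_eqE.
Qed.

End AdjacentTransposition.

Lemma adjacent_increasing_perm1 (g : P) :
  (forall a a' : 'I_n, a' = a.+1 :> nat -> g a < g a') -> g = 1%g.
Proof.
move=> incr.
have gap d (k m : 'I_n) : m = k + d :> nat -> g k + d <= g m.
  elim: d m => [|d IH] m mE; first by rewrite addn0 (ord_inj (etrans mE (addn0 k))).
  have lt_kd : k + d < n by have := ltn_ord m; lia.
  have := IH (Ordinal lt_kd) erefl; have := incr (Ordinal lt_kd) m.
  rewrite mE addnS => /(_ erefl); lia.
apply/permP => m; apply/val_inj; rewrite perm1 /=.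
have lt_mn := ltn_ord m.
have lt0 : 0 < n by apply: leq_ltn_trans lt_mn.
have ltn1 : n.-1 < n by rewrite prednK.
have bottom := gap m (Ordinal lt0) m erefl.
have top : g m + (n.-1 - m) <= g (Ordinal ltn1) by apply: gap => /=; lia.
have := ltn_ord (g (Ordinal ltn1)); lia.
Qed.

Lemma exists_adjacent_descent (g : P) : g != 1%g ->
  exists a a' : 'I_n, a' = a.+1 :> nat /\ g a' < g a.
Proof.
move=> g1; have [/existsP[a /existsP[a' /andP[/eqP a'E desc]]]|no_desc] :=
  boolP [exists a : 'I_n, exists a' : 'I_n, (a' == a.+1 :> nat) && (g a' < g a)].
  by exists a, a'.
case/eqP: g1; apply: adjacent_increasing_perm1 => a a' a'E.
move/existsPn/(_ a)/existsPn/(_ a'): no_desc; rewrite a'E eqxx /= -leqNgt leq_eqVlt.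
case/orP=> // /eqP/val_inj/perm_inj aa'; move: a'E; rewrite aa'; lia.
Qed.

Lemma card_matched_pair (D : {set P}) : matched_pair D -> #|D| = 2.
Proof. by case=> x [y [-> [_ [neq_xy _]]]]; rewrite cards2 neq_xy. Qed.

Lemma apm_card_odd (Q : {set P}) Qs z : almost_perfect_matching Q Qs z -> odd #|Q|.
Proof.
case=> lastQ [_ [chain [i0 lt_i0 [i0_single matched]]]].
have parity k : k <= size Qs -> odd #|prevQ Qs k| = (i0 < k).
  elim: k => [|k IH] lt_k; first by rewrite cards0.
  have /properP[sub _] := chain k lt_k.
  have card_split :
      #|prevQ Qs k.+1| = #|prevQ Qs k| + #|nth set0 Qs k :\: prevQ Qs k|.
    by rewrite /= -(cardsID (prevQ Qs k)) (setIidPr sub).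
  rewrite card_split oddD ltnS leq_eqVlt (IH (ltnW lt_k)).
  have [<-|neq] := eqVneq i0 k; first by rewrite i0_single cards1 ltnn.
  by rewrite (card_matched_pair (matched k lt_k _)) 1?eq_sym // addbF.
have := parity _ (leqnn _); rewrite lt_i0 -lastQ -nth_last.
by case: (size Qs) lt_i0.
Qed.

Lemma bideal_le (v w : P) : bruhat v w -> bideal v \subset bideal w.
Proof.
move=> vw; apply/subsetP => u; rewrite !inE => /asboolP uv.
by apply/asboolP; apply: rt_trans vw.
Qed.

Lemma bideal_even (v : P) : v != 1%g -> ~~ odd #|bideal v|.
Proof.
move=> v1; have /exists_adjacent_descent[a [a' [a'E desc]]] : (v^-1 != 1)%g.
  by rewrite invg_eq1.
apply: (@card_involution_even _ (fun u => u * tperm a a')%g).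
- by move=> u; rewrite -mulgA tperm2 mulg1.
- move=> u; rewrite -{2}(mulg1 u) (inj_eq (mulgI u)); apply/eqP => /permP/(_ a).
  by rewrite tpermL perm1 => /eqP; rewrite eq_sym (negbTE (neq_adjacent a'E)).
- by move=> u; rewrite !inE => /asboolP uv; apply/asboolP; apply: bruhat_lift.
Qed.

End BruhatIdeal.

Theorem lemma5p1 (n : nat) (v : {perm 'I_n}) :
  boolean_perm v -> v != 1%g ->
  forall w : {perm 'I_n}, optimal_partner v w -> ~ bruhat v w.
Proof.
move=> _ v1 w [_ [_ [Qs [z [apm _]]]]] vw.
move: apm; rewrite (setIidPl (bideal_le vw)) => /apm_card_odd.
by rewrite (negbTE (bideal_even v1)).
Qed.
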